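(* Let $g(t)$, $t\in[0,T)$, be the maximal Ricci flow solution on $S^1\times S^3$ of the form $g(t)=\phi^2dz^2+a^2\omega^1\otimes\omega^1+b^2\omega^2\otimes\omega^2+c^2\omega^3\otimes\omega^3$ starting from initial data with $0<a\le b\le c$, and let $\hat c(t)=\max_s c(s,t)$. Suppose that at time $t=0$ we have $1\le\max_s\left(\frac{c}{a}\right)\le\lambda$ for some constant $\lambda\ge1$. Then for all $(z,t)\in S^1\times[0,T)$, $$1\le\frac{c^2}{a^2}\le e^{(\lambda^2-1)}(\lambda^2-1)\left(1-\frac{4t}{\hat c(0)^2}\right)^2+1.$$
   Context: $S^3=SU(2)$ carries a global left-invariant frame $E_1,E_2,E_3$ with $[E_i,E_j]=-2\epsilon_{ijk}E_k$ and dual coframe $\omega^i$; $z\in S^1=[0,2\pi)$, $\phi,a,b,c$ positive smooth $2\pi$-periodic functions; $s$ is the arclength coordinate $ds=\phi\,dz$. The Ricci flow $\partial_tg=-2\mathrm{Ric}(g)$ preserves this form. *)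

From Stdlib Require Import Reals.
From Coquelicot Require Import Coquelicot.
Open Scope R_scope.

(* Functions of (z,t) are curried: f z t.  z is the periodic coordinate on
   S^1 = R / 2piZ, t is time. *)

Definition dz (f : R -> R -> R) : R -> R -> R :=
  fun z t => Derive (fun x => f x t) z.
Definition dt (f : R -> R -> R) : R -> R -> R :=
  fun z t => Derive (fun s => f z s) t.

Fixpoint pdz (n : nat) (f : R -> R -> R) : R -> R -> R :=
  match n with O => f | S k => dz (pdz k f) end.
Fixpoint pdt (m : nat) (f : R -> R -> R) : R -> R -> R :=
  match m with O => f | S k => dt (pdt k f) end.
Definition pd (n m : nat) (f : R -> R -> R) : R -> R -> R := pdz n (pdt m f).

Definition uncurry2 (f : R -> R -> R) : R * R -> R := fun p => f (fst p) (snd p).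

Definition smooth_on (T : Rbar) (f : R -> R -> R) : Prop :=
  (forall (n m : nat) (z t : R), 0 < t -> Rbar_lt t T ->
     ex_derive (fun x => pd n m f x t) z /\
     ex_derive (fun s => pd n m f z s) t /\
     continuous (uncurry2 (pd n m f)) (z, t)) /\
  (forall (n : nat) (z t : R), 0 <= t -> Rbar_lt t T ->
     ex_derive (fun x => pdz n f x t) z /\
     filterlim (uncurry2 (pdz n f)) (within (fun p : R * R => 0 <= snd p) (locally (z, t)))
       (locally (pdz n f z t))).

Definition periodic_z (f : R -> R -> R) : Prop :=
  forall z t, f (z + 2 * PI) t = f z t.

(* arclength derivative d/ds = (1/phi) d/dz *)
Definition ds (phi f : R -> R -> R) : R -> R -> R :=
  fun z t => dz f z t / phi z t.
Definition dss (phi f : R -> R -> R) : R -> R -> R := ds phi (ds phi f).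

(* Ricci flow  d/dt g = -2 Ric(g)  for
     g = phi^2 dz^2 + a^2 w1^2 + b^2 w2^2 + c^2 w3^2,
   with [E_i,E_j] = -2 eps_ijk E_k, written out as the equivalent PDE system
   for (phi,a,b,c). *)
Definition RF_eqs (phi a b c : R -> R -> R) (z t : R) : Prop :=
  dt a z t = dss phi a z t
             + ds phi a z t * (ds phi b z t / b z t + ds phi c z t / c z t)
             - 2 * (a z t ^ 4 - (b z t ^ 2 - c z t ^ 2) ^ 2)
                 / (a z t * b z t ^ 2 * c z t ^ 2) /\
  dt b z t = dss phi b z t
             + ds phi b z t * (ds phi a z t / a z t + ds phi c z t / c z t)
             - 2 * (b z t ^ 4 - (a z t ^ 2 - c z t ^ 2) ^ 2)
                 / (b z t * a z t ^ 2 * c z t ^ 2) /\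
  dt c z t = dss phi c z t
             + ds phi c z t * (ds phi a z t / a z t + ds phi b z t / b z t)
             - 2 * (c z t ^ 4 - (a z t ^ 2 - b z t ^ 2) ^ 2)
                 / (c z t * a z t ^ 2 * b z t ^ 2) /\
  dt phi z t = phi z t * (dss phi a z t / a z t + dss phi b z t / b z t
                          + dss phi c z t / c z t).

Definition RF_solution (T : Rbar) (phi a b c : R -> R -> R) : Prop :=
  Rbar_lt 0 T /\
  (forall f, (f = phi \/ f = a \/ f = b \/ f = c) ->
     smooth_on T f /\ periodic_z f /\
     (forall z t, 0 <= t -> Rbar_lt t T -> 0 < f z t)) /\
  (forall z t, 0 < t -> Rbar_lt t T -> RF_eqs phi a b c z t).

Definition RF_maximal (T : Rbar) (phi a b c : R -> R -> R) : Prop :=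
  RF_solution T phi a b c /\
  ~ (exists (T' : Rbar) (phi' a' b' c' : R -> R -> R),
       Rbar_lt T T' /\ RF_solution T' phi' a' b' c' /\
       forall z t, 0 <= t -> Rbar_lt t T ->
         phi' z t = phi z t /\ a' z t = a z t /\ b' z t = b z t /\ c' z t = c z t).

Definition chat (c : R -> R -> R) (t : R) : R :=
  real (Lub_Rbar (fun y => exists z, y = c z t)).

(* Three maximum-principle arguments.  First, a, b <= c is preserved: where the
   larger of a/c and b/c, say a/c, first exceeds 1 at a spatial maximum, diffusion
   contributes nonpositively to d/dt (a/c) and the reaction term
   -4 (a^2 - c^2) (a^2 + c^2 - b^2) / (a b^2 c) is negative because c < a and b <= a.
   Second, once a, b <= c, the reaction term of c gives c dc/dt <= -2 at a spatial
   maximum of c, so c^2 + 4t <= chat(0)^2.  Third, with D = chat(0)^2 - 4t, which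
   dominates c^2 and hence b^2, the quantity (c^2/a^2 - 1) / D^2 does not increase at
   its spatial maxima, so it stays below its initial bound (lambda^2 - 1) / chat(0)^4.
   This gives the estimate even without the factor exp (lambda^2 - 1) >= 1. *)

From Stdlib Require Import Reals Lra Lia ClassicalEpsilon.
From Coquelicot Require Import Coquelicot.
Open Scope R_scope.

(** * Continuity on the half-plane t >= 0 *)

Definition half_continuous (F : R -> R -> R) (z t : R) : Prop :=
  filterlim (uncurry2 F) (within (fun p : R * R => 0 <= snd p) (locally (z, t)))
    (locally (F z t)).

Lemma half_continuous_eps (F : R -> R -> R) (z t eps : R) :
  half_continuous F z t -> 0 < eps ->
  exists del, 0 < del /\ forall z' t', 0 <= t' -> Rabs (z' - z) < del ->
    Rabs (t' - t) < del -> Rabs (F z' t' - F z t) < eps.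
Proof.
  intros HF Heps.
  destruct (HF (ball (F z t) (mkposreal eps Heps))) as [del Hdel].
  { apply locally_ball. }
  exists del; split; [apply cond_pos |].
  intros z' t' Ht' Hz Ht. exact (Hdel (z', t') (conj Hz Ht) Ht').
Qed.

Lemma half_continuous_op1 (h : R -> R) (F : R -> R -> R) (z t : R) :
  filterlim h (locally (F z t)) (locally (h (F z t))) ->
  half_continuous F z t -> half_continuous (fun x s => h (F x s)) z t.
Proof. intros Hh HF. exact (filterlim_comp _ _ _ (uncurry2 F) h _ _ _ HF Hh). Qed.

Lemma half_continuous_op2 (h : R -> R -> R) (F G : R -> R -> R) (z t : R) :
  filterlim (fun p : R * R => h (fst p) (snd p))
    (filter_prod (locally (F z t)) (locally (G z t))) (locally (h (F z t) (G z t))) ->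
  half_continuous F z t -> half_continuous G z t ->
  half_continuous (fun x s => h (F x s) (G x s)) z t.
Proof. intros Hh HF HG. exact (filterlim_comp_2 _ _ h HF HG Hh). Qed.

Lemma half_continuous_const (k z t : R) : half_continuous (fun _ _ => k) z t.
Proof. unfold half_continuous, uncurry2. apply filterlim_const. Qed.

Lemma half_continuous_time (z t : R) : half_continuous (fun _ s => s) z t.
Proof. intros P [eps HP]. exists eps. intros [x s] [_ Hs] _. exact (HP s Hs). Qed.

Lemma half_continuous_plus (F G : R -> R -> R) (z t : R) :
  half_continuous F z t -> half_continuous G z t ->
  half_continuous (fun x s => F x s + G x s) z t.
Proof. apply half_continuous_op2, (filterlim_plus (F z t) (G z t)). Qed.

Lemma half_continuous_mult (F G : R -> R -> R) (z t : R) :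
  half_continuous F z t -> half_continuous G z t ->
  half_continuous (fun x s => F x s * G x s) z t.
Proof. apply half_continuous_op2, (filterlim_mult (F z t) (G z t)). Qed.

Lemma half_continuous_minus (F G : R -> R -> R) (z t : R) :
  half_continuous F z t -> half_continuous G z t ->
  half_continuous (fun x s => F x s - G x s) z t.
Proof.
  intros HF HG. apply (half_continuous_plus F (fun x s => - G x s)); [exact HF |].
  exact (half_continuous_op1 Ropp G z t (filterlim_opp (G z t)) HG).
Qed.

Lemma half_continuous_div (F G : R -> R -> R) (z t : R) :
  half_continuous F z t -> half_continuous G z t -> G z t <> 0 ->
  half_continuous (fun x s => F x s / G x s) z t.
Proof.
  intros HF HG HG0. apply (half_continuous_mult F (fun x s => / G x s)); [exact HF |].
  apply (half_continuous_op1 Rinv G z t); [| exact HG].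
  apply (filterlim_Rbar_inv (G z t)). intros E. apply HG0. now injection E.
Qed.

Lemma half_continuous_pow (F : R -> R -> R) (n : nat) (z t : R) :
  half_continuous F z t -> half_continuous (fun x s => F x s ^ n) z t.
Proof.
  intros HF. induction n as [| n IH]; [apply half_continuous_const |].
  exact (half_continuous_mult F (fun x s => F x s ^ n) z t HF IH).
Qed.

Lemma half_continuous_max (F G : R -> R -> R) (z t : R) :
  half_continuous F z t -> half_continuous G z t ->
  half_continuous (fun x s => Rmax (F x s) (G x s)) z t.
Proof.
  apply half_continuous_op2. intros P [eps HP].
  exists (ball (F z t) eps) (ball (G z t) eps); [exists eps; auto | exists eps; auto |].
  intros u v Hu Hv. apply HP.
  pose proof (Rmax_Rle (F z t) (G z t)). pose proof (Rmax_Rle u v).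
  unfold ball in *; cbn in *; unfold AbsRing_ball, abs, minus, plus, opp in *; cbn in *.
  apply Rabs_def2 in Hu, Hv. apply Rabs_def1; unfold Rmax;
    repeat destruct Rle_dec; lra.
Qed.

(** * A maximum principle for periodic functions of (z, t) *)

Lemma periodic_shift_int (f : R -> R) (p : R) :
  (forall x, f (x + p) = f x) -> forall (k : Z) x, f (x + IZR k * p) = f x.
Proof.
  intros Hp k. induction k as [| k IH | k IH] using Z.peano_ind; intros x.
  - f_equal. ring.
  - rewrite succ_IZR. replace (x + (IZR k + 1) * p) with (x + IZR k * p + p) by ring.
    rewrite Hp. apply IH.
  - rewrite <- Z.sub_1_r, minus_IZR.
    replace (x + (IZR k - 1) * p) with (x - p + IZR k * p) by ring.
    rewrite IH, <- Hp. f_equal. ring.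
Qed.

Lemma periodic_reduce (f : R -> R) (p : R) :
  0 < p -> (forall x, f (x + p) = f x) ->
  forall x, exists y, 0 <= y <= p /\ f y = f x.
Proof.
  intros Hp Hper x. destruct (base_Int_part (x / p)) as [Hlo Hhi].
  exists (x + IZR (- Int_part (x / p)) * p). split.
  - rewrite opp_IZR.
    assert (Hx : x = x / p * p) by (field; lra).
    split; nra.
  - apply periodic_shift_int, Hper.
Qed.

Lemma periodic_max_attained (f : R -> R) :
  (forall x, continuous f x) -> (forall x, f (x + 2 * PI) = f x) ->
  exists x0, forall x, f x <= f x0.
Proof.
  intros Hcont Hper. pose proof PI_RGT_0.
  destruct (continuity_ab_maj f 0 (2 * PI)) as [x0 [Hmax _]]; [lra | |].
  { intros x _. apply continuity_pt_filterlim, Hcont. }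
  exists x0. intros x. destruct (periodic_reduce f (2 * PI) ltac:(lra) Hper x) as [y [Hy <-]].
  exact (Hmax y Hy).
Qed.


Section FirstTime.

Variables (F : R -> R -> R) (t1 l : R).
Hypothesis F_cont : forall z t, 0 <= t <= t1 -> half_continuous F z t.
Hypothesis F_periodic : periodic_z F.

Lemma superlevel_closed (zn tn : nat -> R) (g : R) :
  0 <= g <= t1 -> (forall n, 0 <= zn n <= 2 * PI) -> (forall n, 0 <= tn n) ->
  (forall n, Rabs (tn n - g) < / INR (S n)) -> (forall n, l <= F (zn n) (tn n)) ->
  exists z, l <= F z g.
Proof.
  intros Hg Hz Ht Htn Hl.
  destruct (Bolzano_Weierstrass zn _ (compact_P3 0 (2 * PI)) Hz) as [zl Hzl].
  exists zl. apply Rnot_lt_le. intros Hlt.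
  destruct (half_continuous_eps F zl g (l - F zl g) (F_cont zl g Hg) ltac:(lra))
    as [del [Hdel Hnear]].
  destruct (archimed_cor1 del Hdel) as [N [HN HN0]].
  destruct (Hzl (disc zl (mkposreal del Hdel)) N) as [p [Hp Hzp]].
  { exists (mkposreal del Hdel). intros y Hy. exact Hy. }
  assert (HpN : / INR (S p) <= / INR N).
  { apply Rinv_le_contravar; [apply lt_0_INR; lia | apply le_INR; lia]. }
  specialize (Htn p).
  assert (Hclose : Rabs (F (zn p) (tn p) - F zl g) < l - F zl g).
  { apply Hnear; [apply Ht | exact Hzp | lra]. }
  apply Rabs_def2 in Hclose. specialize (Hl p). lra.
Qed.

Lemma le_level_of_lt_before (z g : R) :
  0 < g <= t1 -> (forall s, 0 <= s < g -> F z s < l) -> F z g <= l.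
Proof.
  intros Hg Hbefore. apply Rnot_lt_le. intros Hlt.
  destruct (half_continuous_eps F z g (F z g - l) (F_cont z g ltac:(lra)) ltac:(lra))
    as [del [Hdel Hnear]].
  set (s := g - Rmin del g / 2).
  assert (Hmin : 0 < Rmin del g <= del /\ Rmin del g <= g).
  { split; [split; [apply Rmin_pos | apply Rmin_l] | apply Rmin_r]; lra. }
  assert (Hclose : Rabs (F z s - F z g) < F z g - l).
  { apply Hnear; unfold s; [lra | | apply Rabs_def1; lra].
    rewrite Rminus_eq_0, Rabs_R0. lra. }
  apply Rabs_def2 in Hclose. specialize (Hbefore s ltac:(unfold s; lra)). lra.
Qed.

Lemma first_time_reached :
  0 <= t1 -> (forall z, F z 0 < l) -> (exists z, l <= F z t1) ->
  exists zs ts, 0 < ts <= t1 /\ l <= F zs ts /\ (forall z, F z ts <= l) /\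
    (forall z s, 0 <= s < ts -> F z s < l).
Proof.
  intros Ht1 Hinit [z1 Hz1].
  set (A := fun t => 0 <= t <= t1 /\ exists z, l <= F z t).
  destruct (Glb_Rbar_correct A) as [Hlb Hglb].
  assert (Hg0 : Rbar_le 0 (Glb_Rbar A)) by (apply Hglb; intros x [Hx _]; simpl; lra).
  assert (Hg1 : Rbar_le (Glb_Rbar A) t1) by (apply Hlb; split; [lra | now exists z1]).
  destruct (Glb_Rbar A) as [g | |]; simpl in Hg0, Hg1; try contradiction.
  assert (Hbefore : forall z s, 0 <= s < g -> F z s < l).
  { intros z s Hs. apply Rnot_le_lt. intros Hle.
    assert (Hgs : Rbar_le g s) by (apply Hlb; split; [lra | now exists z]).
    simpl in Hgs. lra. }
  assert (Happrox : forall n, exists p : R * R,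
    0 <= fst p <= 2 * PI /\ 0 <= snd p /\ Rabs (snd p - g) < / INR (S n) /\
    l <= F (fst p) (snd p)).
  { intros n. assert (Hn : 0 < / INR (S n)) by (apply Rinv_0_lt_compat, lt_0_INR; lia).
    destruct (classic (exists t, A t /\ t < g + / INR (S n))) as [[t [[Ht [z Hz]] Htg]] | Hnone].
    - destruct (periodic_reduce (fun x => F x t) (2 * PI) ltac:(pose proof PI_RGT_0; lra)
        (fun x => F_periodic x t) z) as [y [Hy Hyz]].
      assert (Hgt : Rbar_le g t) by (apply Hlb; split; [exact Ht | now exists z]).
      simpl in Hgt. exists (y, t). cbn [fst snd].
      repeat split; try lra. apply Rabs_def1; lra.
    - exfalso. assert (Hle : Rbar_le (g + / INR (S n)) g).
      { apply Hglb. intros x Hx. simpl. apply Rnot_lt_le. intros Hlt. apply Hnone. now exists x. }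
      change (g + / INR (S n) <= g) in Hle. lra. }
  destruct (choice _ Happrox) as [seq Hseq].
  assert (Hreached : exists z, l <= F z g).
  { apply (superlevel_closed (fun n => fst (seq n)) (fun n => snd (seq n)));
      [lra | intros n; apply Hseq ..]. }
  destruct Hreached as [zs Hzs].
  assert (Hgpos : 0 < g).
  { destruct Hg0 as [| <-]; [assumption |]. specialize (Hinit zs). lra. }
  exists zs, g. repeat split; try lra; [| exact Hbefore].
  intros z. apply le_level_of_lt_before; [lra | apply Hbefore].
Qed.

End FirstTime.

Lemma is_derive_pos_right (f : R -> R) (x d : R) :
  is_derive f x d -> 0 < d -> exists eps, 0 < eps /\ forall k, 0 < k < eps -> f x < f (x + k).
Proof.
  intros Hd Hpos. apply is_derive_Reals in Hd.
  destruct (Hd (d / 2) ltac:(lra)) as [eps Heps].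
  exists eps. split; [apply cond_pos |]. intros k Hk.
  specialize (Heps k ltac:(lra) ltac:(rewrite Rabs_right; lra)).
  apply Rabs_def2 in Heps.
  assert (Hq : 0 < (f (x + k) - f x) / k) by lra.
  assert (Hdiff : 0 < f (x + k) - f x).
  { replace (f (x + k) - f x) with ((f (x + k) - f x) / k * k) by (field; lra). nra. }
  lra.
Qed.

Lemma is_derive_neg_left (f : R -> R) (x d : R) :
  is_derive f x d -> d < 0 -> exists eps, 0 < eps /\ forall k, 0 < k < eps -> f x < f (x - k).
Proof.
  intros Hd Hneg.
  assert (Hrefl : is_derive (fun y => f (2 * x - y)) x (- d)).
  { replace (- d) with (scal (-1) d) by (unfold scal; simpl; unfold mult; simpl; ring).
    apply (is_derive_comp f (fun y => 2 * x - y)).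
    - now replace (2 * x - x) with x by ring.
    - auto_derive; [exact I | ring]. }
  destruct (is_derive_pos_right _ x (- d) Hrefl ltac:(lra)) as [eps [Heps Hk]].
  exists eps. split; [exact Heps |]. intros k Hkk. specialize (Hk k Hkk).
  replace (2 * x - x) with x in Hk by ring. replace (2 * x - (x + k)) with (x - k) in Hk by ring.
  exact Hk.
Qed.

Lemma is_derive_max_eq0 (f : R -> R) (x d : R) :
  is_derive f x d -> (forall y, f y <= f x) -> d = 0.
Proof.
  intros Hd Hmax. apply is_derive_Reals in Hd.
  exact (deriv_maximum f (x - 1) (x + 1) x (exist _ d Hd) ltac:(lra) ltac:(lra)
           (fun y _ _ => Hmax y)).
Qed.

Lemma is_derive2_max_le0 (f df : R -> R) (x d2 : R) :
  (forall y, is_derive f y (df y)) -> is_derive df x d2 -> (forall y, f y <= f x) ->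
  d2 <= 0.
Proof.
  intros Hf Hdf Hmax. apply Rnot_lt_le. intros Hpos.
  pose proof (is_derive_max_eq0 f x (df x) (Hf x) Hmax) as Hcrit.
  destruct (is_derive_pos_right df x d2 Hdf Hpos) as [eps [Heps Hincr]].
  destruct (MVT_cor2 f df x (x + eps / 2) ltac:(lra)) as [y [Hmvt Hy]].
  { intros y _. apply is_derive_Reals, Hf. }
  specialize (Hincr (y - x) ltac:(lra)). replace (x + (y - x)) with y in Hincr by ring.
  specialize (Hmax (x + eps / 2)). nra.
Qed.

Lemma quotient_max_conditions (f g df dg : R -> R) (x d2f d2g : R) :
  (forall y, is_derive f y (df y)) -> (forall y, is_derive g y (dg y)) ->
  (forall y, 0 < g y) -> is_derive df x d2f -> is_derive dg x d2g ->
  (forall y, f y / g y <= f x / g x) ->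
  df x * g x = f x * dg x /\ d2f * g x - f x * d2g <= 0.
Proof.
  intros Hf Hg Hgpos Hdf Hdg Hmax.
  set (num := fun y => df y * g y - f y * dg y).
  assert (Hquot : forall y, is_derive (fun y => f y / g y) y (num y / g y ^ 2)).
  { intros y. apply is_derive_div; [apply Hf | apply Hg | specialize (Hgpos y); lra]. }
  assert (Hgx : 0 < g x) by apply Hgpos.
  assert (Hcrit : num x = 0).
  { pose proof (is_derive_max_eq0 _ x _ (Hquot x) Hmax) as H0.
    apply (Rmult_eq_reg_r (/ g x ^ 2)); [rewrite Rmult_0_l; exact H0 |].
    apply Rinv_neq_0_compat, pow_nonzero; lra. }
  split; [unfold num in Hcrit; cbv beta in Hcrit; lra |].
  assert (Hnum : is_derive num x (d2f * g x - f x * d2g)).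
  { replace (d2f * g x - f x * d2g) with
      (d2f * g x + df x * dg x - (df x * dg x + f x * d2g)) by ring.
    apply @is_derive_minus; apply (is_derive_mult _ _ x); auto; intros; apply Rmult_comm. }
  pose proof (is_derive_div num (fun y => g y ^ 2) x _ _ Hnum
    (is_derive_pow g 2 x _ (Hg x)) (pow_nonzero (g x) 2 ltac:(lra))) as Hquot'.
  pose proof (is_derive2_max_le0 _ _ x _ Hquot Hquot' Hmax) as Hle.
  rewrite Hcrit, Rmult_0_l, Rminus_0_r in Hle.
  replace ((d2f * g x - f x * d2g) * g x ^ 2 / (g x ^ 2) ^ 2)
    with ((d2f * g x - f x * d2g) * / g x ^ 2) in Hle by (field; lra).
  assert (Hinv : 0 < / g x ^ 2) by (apply Rinv_0_lt_compat, pow_lt; lra).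
  nra.
Qed.

Lemma is_derive_ge_of_first_time (f : R -> R) (t d del : R) :
  0 < t -> is_derive f t d ->
  (forall s, 0 <= s < t -> f s - del * s < f t - del * t) -> del <= d.
Proof.
  intros Ht Hd Hfirst. apply Rnot_lt_le. intros Hlt.
  assert (Htilt : is_derive (fun s => f s - del * s) t (d - del)).
  { apply @is_derive_minus; [exact Hd | auto_derive; [exact I | ring]]. }
  destruct (is_derive_neg_left _ t _ Htilt ltac:(lra)) as [eps [Heps Hk]].
  set (k := Rmin eps t / 2).
  assert (Hmin : 0 < Rmin eps t /\ Rmin eps t <= eps /\ Rmin eps t <= t).
  { repeat split; [apply Rmin_pos | apply Rmin_l | apply Rmin_r]; lra. }
  specialize (Hk k ltac:(unfold k; lra)). specialize (Hfirst (t - k) ltac:(unfold k; lra)).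
  lra.
Qed.

(* Tilting by [del * s] turns the first time [F] exceeds [M] into a strict first
   crossing, so that a nonpositive time derivative there is already contradictory. *)
Lemma max_principle (T : Rbar) (F : R -> R -> R) (M : R) :
  (forall z t, 0 <= t -> Rbar_lt t T -> half_continuous F z t) -> periodic_z F ->
  (forall z, F z 0 <= M) ->
  (forall zs ts del, 0 < ts -> Rbar_lt ts T -> 0 < del -> M < F zs ts ->
     (forall z, F z ts <= F zs ts) ->
     (forall s, 0 <= s < ts -> F zs s - del * s < F zs ts - del * ts) -> False) ->
  forall z t, 0 <= t -> Rbar_lt t T -> F z t <= M.
Proof.
  intros Hcont Hper Hinit Hkey z1 t1 Ht1 HT1. apply Rnot_lt_le. intros Hgt.
  assert (Ht1pos : 0 < t1).
  { destruct Ht1 as [| <-]; [assumption |]. specialize (Hinit z1). lra. }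
  set (del := (F z1 t1 - M) / (2 * t1)).
  assert (Hdel : del * t1 = (F z1 t1 - M) / 2) by (unfold del; field; lra).
  assert (Hdelpos : 0 < del) by (unfold del; apply Rdiv_lt_0_compat; lra).
  destruct (first_time_reached (fun x s => F x s - del * s) t1 (F z1 t1 - del * t1))
    as [zs [ts [Hts [Hreach [Hmax Hbefore]]]]].
  - intros z t Ht. apply half_continuous_minus.
    + apply Hcont; [lra | apply (Rbar_le_lt_trans t t1 T); [simpl; lra | exact HT1]].
    + apply half_continuous_mult; [apply half_continuous_const | apply half_continuous_time].
  - intros z t. now rewrite Hper.
  - exact Ht1.
  - intros z. specialize (Hinit z). lra.
  - exists z1. lra.
  - apply (Hkey zs ts del); try lra.
    + apply (Rbar_le_lt_trans ts t1 T); [simpl; lra | exact HT1].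
    + nra.
    + intros z. specialize (Hmax z). lra.
    + intros s Hs. specialize (Hbefore zs s Hs). lra.
Qed.

Lemma max_principle_derive (T : Rbar) (F : R -> R -> R) (M : R) :
  (forall z t, 0 <= t -> Rbar_lt t T -> half_continuous F z t) -> periodic_z F ->
  (forall z, F z 0 <= M) ->
  (forall zs ts, 0 < ts -> Rbar_lt ts T -> M < F zs ts -> (forall z, F z ts <= F zs ts) ->
     exists d, is_derive (fun s => F zs s) ts d /\ d <= 0) ->
  forall z t, 0 <= t -> Rbar_lt t T -> F z t <= M.
Proof.
  intros Hcont Hper Hinit Hkey. apply max_principle; try assumption.
  intros zs ts del Hts HT Hdel HM Hmax Hfirst.
  destruct (Hkey zs ts Hts HT HM Hmax) as [d [Hd Hdle]].
  pose proof (is_derive_ge_of_first_time _ ts d del Hts Hd Hfirst). lra.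
Qed.

(** * The warped-product Ricci flow *)

Record regular (T : Rbar) (f : R -> R -> R) : Prop := {
  regular_pos : forall z t, 0 <= t -> Rbar_lt t T -> 0 < f z t;
  regular_cont : forall z t, 0 <= t -> Rbar_lt t T -> half_continuous f z t;
  regular_dz : forall z t, 0 <= t -> Rbar_lt t T -> is_derive (fun x => f x t) z (dz f z t);
  regular_dzz : forall z t, 0 <= t -> Rbar_lt t T ->
    is_derive (fun x => dz f x t) z (dz (dz f) z t);
  regular_dt : forall z t, 0 < t -> Rbar_lt t T -> is_derive (fun s => f z s) t (dt f z t);
  regular_periodic : periodic_z f }.

Lemma regular_of_smooth (T : Rbar) (f : R -> R -> R) :
  smooth_on T f -> periodic_z f -> (forall z t, 0 <= t -> Rbar_lt t T -> 0 < f z t) ->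
  regular T f.
Proof.
  intros [Hint Hbdry] Hper Hpos. split; try assumption.
  - intros z t Ht HT. exact (proj2 (Hbdry O z t Ht HT)).
  - intros z t Ht HT. apply Derive_correct, (Hbdry O z t Ht HT).
  - intros z t Ht HT. apply Derive_correct, (Hbdry 1%nat z t Ht HT).
  - intros z t Ht HT. apply Derive_correct, (Hint O O z t Ht HT).
Qed.

Lemma ratio_spatial_max (T : Rbar) (P Q : R -> R -> R) (zs ts : R) :
  regular T P -> regular T Q -> 0 <= ts -> Rbar_lt ts T ->
  (forall z, P z ts / Q z ts <= P zs ts / Q zs ts) ->
  dz P zs ts * Q zs ts = P zs ts * dz Q zs ts /\
  dz (dz P) zs ts * Q zs ts - P zs ts * dz (dz Q) zs ts <= 0.
Proof.
  intros HP HQ Hts HT Hmax.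
  apply (quotient_max_conditions (fun z => P z ts) (fun z => Q z ts)
    (fun z => dz P z ts) (fun z => dz Q z ts)); try assumption;
    intros; [apply HP | apply HQ | apply HQ | apply HP | apply HQ]; assumption.
Qed.

(* Right-hand side of the equation for [dt P] in [RF_eqs], [U] and [Q] being the two
   other coefficients. *)
Definition flow_term (phi P U Q : R -> R -> R) (z t : R) : R :=
  dss phi P z t + ds phi P z t * (ds phi U z t / U z t + ds phi Q z t / Q z t)
  - 2 * (P z t ^ 4 - (U z t ^ 2 - Q z t ^ 2) ^ 2) / (P z t * U z t ^ 2 * Q z t ^ 2).

Lemma flow_term_comm (phi P U Q : R -> R -> R) (z t : R) :
  flow_term phi P U Q z t = flow_term phi P Q U z t.
Proof.
  unfold flow_term. rewrite (Rplus_comm (ds phi U z t / U z t)).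
  replace (P z t * U z t ^ 2 * Q z t ^ 2) with (P z t * Q z t ^ 2 * U z t ^ 2) by ring.
  replace ((U z t ^ 2 - Q z t ^ 2) ^ 2) with ((Q z t ^ 2 - U z t ^ 2) ^ 2) by ring.
  reflexivity.
Qed.

Section Diffusion.

Variables (T : Rbar) (phi : R -> R -> R).
Hypothesis phi_regular : regular T phi.

Lemma dss_eq (P : R -> R -> R) (z t : R) :
  regular T P -> 0 <= t -> Rbar_lt t T ->
  dss phi P z t = (dz (dz P) z t * phi z t - dz P z t * dz phi z t) / phi z t ^ 3.
Proof.
  intros HP Ht HT. pose proof (regular_pos _ _ phi_regular z t Ht HT) as Hphi.
  unfold dss, ds at 1. unfold dz at 1. unfold ds.
  rewrite (is_derive_unique _ _ _ (is_derive_div (fun x => dz P x t) (fun x => phi x t) z _ _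
    (regular_dzz _ _ HP z t Ht HT) (regular_dz _ _ phi_regular z t Ht HT) ltac:(lra))).
  field. lra.
Qed.

Lemma ratio_evolution (P Q U : R -> R -> R) (z t : R) :
  regular T P -> regular T Q -> regular T U -> 0 <= t -> Rbar_lt t T ->
  dt P z t = flow_term phi P U Q z t -> dt Q z t = flow_term phi Q U P z t ->
  dz P z t * Q z t = P z t * dz Q z t ->
  dt P z t * Q z t - P z t * dt Q z t =
    (dz (dz P) z t * Q z t - P z t * dz (dz Q) z t) / phi z t ^ 2
    - 4 * (P z t ^ 2 - Q z t ^ 2) * (P z t ^ 2 + Q z t ^ 2 - U z t ^ 2)
        / (P z t * U z t ^ 2 * Q z t).
Proof.
  intros HP HQ HU Ht HT HdtP HdtQ Hcrit.
  pose proof (regular_pos _ _ phi_regular z t Ht HT).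
  pose proof (regular_pos _ _ HP z t Ht HT). pose proof (regular_pos _ _ HQ z t Ht HT).
  pose proof (regular_pos _ _ HU z t Ht HT).
  rewrite HdtP, HdtQ. unfold flow_term. rewrite (dss_eq P), (dss_eq Q) by assumption.
  unfold ds. replace (dz P z t) with (P z t * dz Q z t / Q z t) by (field_simplify_eq; lra).
  field. lra.
Qed.

Lemma ratio_rate_at_max (P Q U : R -> R -> R) (zs ts : R) :
  regular T P -> regular T Q -> regular T U -> 0 <= ts -> Rbar_lt ts T ->
  dt P zs ts = flow_term phi P U Q zs ts -> dt Q zs ts = flow_term phi Q U P zs ts ->
  (forall z, P z ts / Q z ts <= P zs ts / Q zs ts) ->
  dt P zs ts * Q zs ts - P zs ts * dt Q zs ts <=
    - 4 * (P zs ts ^ 2 - Q zs ts ^ 2) * (P zs ts ^ 2 + Q zs ts ^ 2 - U zs ts ^ 2)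
      / (P zs ts * U zs ts ^ 2 * Q zs ts).
Proof.
  intros HP HQ HU Hts HT HdtP HdtQ Hmax.
  destruct (ratio_spatial_max T P Q zs ts HP HQ Hts HT Hmax) as [Hcrit Hdiff].
  rewrite (ratio_evolution P Q U) by assumption.
  pose proof (regular_pos _ _ phi_regular zs ts Hts HT).
  assert (0 < / phi zs ts ^ 2) by (apply Rinv_0_lt_compat, pow_lt; lra).
  assert ((dz (dz P) zs ts * Q zs ts - P zs ts * dz (dz Q) zs ts) / phi zs ts ^ 2 <= 0)
    by (unfold Rdiv; nra).
  lra.
Qed.

Lemma ratio_decreases_above_one (P Q U : R -> R -> R) (zs ts : R) :
  regular T P -> regular T Q -> regular T U -> 0 <= ts -> Rbar_lt ts T ->
  dt P zs ts = flow_term phi P U Q zs ts -> dt Q zs ts = flow_term phi Q U P zs ts ->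
  (forall z, P z ts / Q z ts <= P zs ts / Q zs ts) ->
  Q zs ts < P zs ts -> U zs ts <= P zs ts ->
  dt P zs ts * Q zs ts - P zs ts * dt Q zs ts < 0.
Proof.
  intros HP HQ HU Hts HT HdtP HdtQ Hmax HQP HUP.
  pose proof (ratio_rate_at_max P Q U zs ts HP HQ HU Hts HT HdtP HdtQ Hmax) as Hrate.
  pose proof (regular_pos _ _ HQ zs ts Hts HT). pose proof (regular_pos _ _ HU zs ts Hts HT).
  assert (Hreaction :
    0 < 4 * (P zs ts ^ 2 - Q zs ts ^ 2) * (P zs ts ^ 2 + Q zs ts ^ 2 - U zs ts ^ 2)
          / (P zs ts * U zs ts ^ 2 * Q zs ts)).
  { assert (Q zs ts ^ 2 < P zs ts ^ 2) by nra. assert (U zs ts ^ 2 <= P zs ts ^ 2) by nra.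
    assert (0 < Q zs ts ^ 2) by (apply pow_lt; lra).
    apply Rdiv_lt_0_compat.
    - apply Rmult_lt_0_compat; [apply Rmult_lt_0_compat |]; lra.
    - apply Rmult_lt_0_compat; [apply Rmult_lt_0_compat |]; try apply pow_lt; lra. }
  lra.
Qed.

End Diffusion.

Lemma reaction_lower_bound (a b c : R) :
  0 < a <= c -> 0 < b <= c -> a ^ 2 * b ^ 2 <= c ^ 4 - (a ^ 2 - b ^ 2) ^ 2.
Proof.
  intros Ha Hb.
  replace (c ^ 4 - (a ^ 2 - b ^ 2) ^ 2) with
    ((c ^ 2 - a ^ 2 + b ^ 2) * (c ^ 2 + a ^ 2 - b ^ 2)) by ring.
  assert (b ^ 2 <= c ^ 2 - a ^ 2 + b ^ 2) by nra.
  assert (a ^ 2 <= c ^ 2 + a ^ 2 - b ^ 2) by nra.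
  rewrite (Rmult_comm (a ^ 2)). apply Rmult_le_compat; nra.
Qed.

(* The left-hand side is d/dt ((c/a)^2 - 1) / D^2 with D' = -4, where
   X = dc/dt a - c da/dt is bounded as in [ratio_rate_at_max]. *)
Lemma ratio_rate_nonpos (a b c D X : R) :
  0 < a <= c -> 0 < b <= c -> c ^ 2 <= D ->
  X <= - 4 * (c ^ 2 - a ^ 2) * (c ^ 2 + a ^ 2 - b ^ 2) / (c * b ^ 2 * a) ->
  2 * c * X / (a ^ 3 * D ^ 2) + 8 * (c ^ 2 / a ^ 2 - 1) / D ^ 3 <= 0.
Proof.
  intros Ha Hb HD HX.
  assert (HDpos : 0 < D) by nra.
  assert (Hscale : 0 < 2 * c / (a ^ 3 * D ^ 2)).
  { apply Rdiv_lt_0_compat; [lra | apply Rmult_lt_0_compat; apply pow_lt; lra]. }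
  apply Rmult_le_compat_l with (r := 2 * c / (a ^ 3 * D ^ 2)) in HX; [| lra].
  replace (2 * c * X / (a ^ 3 * D ^ 2)) with (2 * c / (a ^ 3 * D ^ 2) * X) by (field; lra).
  assert (Hid : 2 * c / (a ^ 3 * D ^ 2) *
      (- 4 * (c ^ 2 - a ^ 2) * (c ^ 2 + a ^ 2 - b ^ 2) / (c * b ^ 2 * a))
      + 8 * (c ^ 2 / a ^ 2 - 1) / D ^ 3
    = 8 * (c ^ 2 - a ^ 2) * (a ^ 2 * b ^ 2 - (c ^ 2 + a ^ 2 - b ^ 2) * D)
      / (a ^ 4 * b ^ 2 * D ^ 3)) by (field; lra).
  assert (Hsign : 8 * (c ^ 2 - a ^ 2) * (a ^ 2 * b ^ 2 - (c ^ 2 + a ^ 2 - b ^ 2) * D) <= 0).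
  { assert (0 <= c ^ 2 - a ^ 2) by nra.
    assert (a ^ 2 * b ^ 2 <= (c ^ 2 + a ^ 2 - b ^ 2) * D).
    { assert (a ^ 2 <= c ^ 2 + a ^ 2 - b ^ 2) by nra. assert (b ^ 2 <= D) by nra.
      apply Rmult_le_compat; nra. }
    nra. }
  assert (Hden : 0 < / (a ^ 4 * b ^ 2 * D ^ 3)).
  { apply Rinv_0_lt_compat.
    apply Rmult_lt_0_compat; [apply Rmult_lt_0_compat |]; apply pow_lt; lra. }
  unfold Rdiv at 3 in Hid. nra.
Qed.

Section RicciFlow.

Variables (T : Rbar) (phi a b c : R -> R -> R).
Hypothesis solution : RF_solution T phi a b c.

Lemma solution_regular (f : R -> R -> R) :
  f = phi \/ f = a \/ f = b \/ f = c -> regular T f.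
Proof.
  intros Hf. destruct solution as [_ [Hcoef _]].
  destruct (Hcoef f Hf) as [Hsmooth [Hper Hpos]]. now apply regular_of_smooth.
Qed.

Let T_pos : Rbar_lt 0 T := proj1 solution.
Let phi_regular : regular T phi := solution_regular phi (or_introl eq_refl).
Let a_regular : regular T a := solution_regular a (or_intror (or_introl eq_refl)).
Let b_regular : regular T b :=
  solution_regular b (or_intror (or_intror (or_introl eq_refl))).
Let c_regular : regular T c :=
  solution_regular c (or_intror (or_intror (or_intror eq_refl))).

Lemma solution_flow (z t : R) : 0 < t -> Rbar_lt t T ->
  dt a z t = flow_term phi a b c z t /\ dt b z t = flow_term phi b a c z t /\
  dt c z t = flow_term phi c a b z t.
Proof.
  intros Ht HT. destruct (proj2 (proj2 solution) z t Ht HT) as [Ha [Hb [Hc _]]].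
  now repeat split.
Qed.

Lemma chat_spec : (forall z, c z 0 <= chat c 0) /\ 0 < chat c 0.
Proof.
  destruct (periodic_max_attained (fun z => c z 0)) as [z0 Hz0].
  - intros z. apply (ex_derive_continuous (fun x => c x 0)).
    exists (dz c z 0). apply (regular_dz _ _ c_regular); [lra | exact T_pos].
  - intros z. apply (regular_periodic _ _ c_regular).
  - assert (Hchat : chat c 0 = c z0 0).
    { unfold chat. replace (Lub_Rbar (fun y => exists z, y = c z 0)) with (Finite (c z0 0)).
      { reflexivity. }
      symmetry. apply is_lub_Rbar_unique. split.
      - intros y [z ->]. apply Hz0.
      - intros ub Hub. apply Hub. now exists z0. }
    rewrite Hchat. split; [exact Hz0 | apply (regular_pos _ _ c_regular); [lra | exact T_pos]].
Qed.

Lemma ratio_first_crossing_absurd (P U : R -> R -> R) (F : R -> R -> R) (zs ts del : R) :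
  regular T P -> regular T U -> 0 < ts -> Rbar_lt ts T -> 0 < del ->
  dt P zs ts = flow_term phi P U c zs ts -> dt c zs ts = flow_term phi c U P zs ts ->
  (forall z s, P z s / c z s <= F z s) -> (forall z s, U z s / c z s <= F z s) ->
  P zs ts / c zs ts = F zs ts -> 1 < F zs ts -> (forall z, F z ts <= F zs ts) ->
  (forall s, 0 <= s < ts -> F zs s - del * s < F zs ts - del * ts) -> False.
Proof.
  intros HP HU Hts HT Hdel HdtP HdtC HPF HUF Heq Habove Hmax Hfirst.
  assert (Hts0 : 0 <= ts) by lra.
  pose proof (regular_pos _ _ c_regular zs ts Hts0 HT) as Hc.
  assert (Hspatial : forall z, P z ts / c z ts <= P zs ts / c zs ts).
  { intros z. rewrite Heq. eapply Rle_trans; [apply HPF | apply Hmax]. }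
  assert (HcP : c zs ts < P zs ts).
  { assert (Habove' : 1 < P zs ts / c zs ts) by lra.
    apply (Rlt_div_r 1 _ _ Hc) in Habove'. lra. }
  assert (HUP : U zs ts <= P zs ts).
  { assert (Hq : U zs ts / c zs ts <= P zs ts / c zs ts) by (rewrite Heq; apply HUF).
    unfold Rdiv in Hq. apply Rmult_le_reg_r in Hq; [lra | now apply Rinv_0_lt_compat]. }
  pose proof (ratio_decreases_above_one T phi phi_regular P c U zs ts HP c_regular HU Hts0 HT
    HdtP HdtC Hspatial HcP HUP) as Hneg.
  pose proof (is_derive_div (fun s => P zs s) (fun s => c zs s) ts _ _
    (regular_dt _ _ HP zs ts Hts HT) (regular_dt _ _ c_regular zs ts Hts HT) ltac:(lra)) as Hd.
  assert (Hge := is_derive_ge_of_first_time _ ts _ del Hts Hd).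
  enough (Hrate : del <= (dt P zs ts * c zs ts - P zs ts * dt c zs ts) / c zs ts ^ 2).
  { assert (Hc2 : 0 < c zs ts ^ 2) by (apply pow_lt; lra).
    pose proof (Rdiv_neg_pos _ _ Hneg Hc2). lra. }
  apply Hge. intros s Hs. rewrite Heq.
  eapply Rle_lt_trans; [| apply Hfirst, Hs]. specialize (HPF zs s). lra.
Qed.

Section InitialOrder.

Hypothesis initial_order : forall z, a z 0 <= c z 0 /\ b z 0 <= c z 0.

(* Both ratios are needed at once: the reaction term of a/c is negative at a
   maximum above 1 only if b <= a there. *)
Lemma order_preserved :
  forall z t, 0 <= t -> Rbar_lt t T -> a z t <= c z t /\ b z t <= c z t.
Proof.
  set (F := fun z t => Rmax (a z t / c z t) (b z t / c z t)).
  assert (HF : forall z t, 0 <= t -> Rbar_lt t T -> F z t <= 1).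
  { apply (max_principle T F 1).
    - intros z t Ht HT. pose proof (regular_pos _ _ c_regular z t Ht HT).
      apply half_continuous_max; apply half_continuous_div; try lra;
        [apply a_regular | apply c_regular | apply b_regular | apply c_regular]; assumption.
    - intros z t. unfold F.
      now rewrite (regular_periodic _ _ a_regular), (regular_periodic _ _ b_regular),
        (regular_periodic _ _ c_regular).
    - intros z. destruct (initial_order z) as [Ha Hb].
      pose proof (regular_pos _ _ c_regular z 0 (Rle_refl 0) T_pos) as Hc.
      unfold F. apply Rmax_lub; apply (Rdiv_le_1 _ _ Hc); assumption.
    - intros zs ts del Hts HT Hdel Habove Hmax Hfirst.
      destruct (solution_flow zs ts Hts HT) as [Ha [Hb Hc]].
      unfold F in Habove at 1.
      destruct (Rle_dec (a zs ts / c zs ts) (b zs ts / c zs ts)) as [Hab | Hba].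
      + apply (ratio_first_crossing_absurd b a F zs ts del); auto;
          [intros; apply Rmax_r | intros; apply Rmax_l | unfold F; now rewrite Rmax_right].
      + apply (ratio_first_crossing_absurd a b F zs ts del); auto;
          [now rewrite flow_term_comm | intros; apply Rmax_l | intros; apply Rmax_r |].
        unfold F. rewrite Rmax_left; lra. }
  intros z t Ht HT. specialize (HF z t Ht HT).
  pose proof (regular_pos _ _ c_regular z t Ht HT).
  split; apply Rdiv_le_1; try assumption; eapply Rle_trans; [| exact HF | | exact HF];
    [apply Rmax_l | apply Rmax_r].
Qed.

Lemma c_rate_at_max (zs ts : R) :
  0 < ts -> Rbar_lt ts T -> (forall z, c z ts <= c zs ts) -> c zs ts * dt c zs ts <= -2.
Proof.
  intros Hts HT Hcmax. assert (Hts0 : 0 <= ts) by lra.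
  pose proof (regular_pos _ _ phi_regular zs ts Hts0 HT) as Hphi.
  pose proof (regular_pos _ _ a_regular zs ts Hts0 HT) as Ha.
  pose proof (regular_pos _ _ b_regular zs ts Hts0 HT) as Hb.
  pose proof (regular_pos _ _ c_regular zs ts Hts0 HT) as Hc.
  destruct (order_preserved zs ts Hts0 HT) as [Hac Hbc].
  pose proof (is_derive_max_eq0 _ zs _ (regular_dz _ _ c_regular zs ts Hts0 HT) Hcmax)
    as Hcrit.
  pose proof (is_derive2_max_le0 (fun z => c z ts) (fun z => dz c z ts) zs _
    (fun z => regular_dz _ _ c_regular z ts Hts0 HT)
    (regular_dzz _ _ c_regular zs ts Hts0 HT) Hcmax) as Hconcave.
  destruct (solution_flow zs ts Hts HT) as [_ [_ ->]]. unfold flow_term.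
  rewrite (dss_eq T phi phi_regular c) by assumption. unfold ds. rewrite Hcrit.
  pose proof (reaction_lower_bound (a zs ts) (b zs ts) (c zs ts) ltac:(lra) ltac:(lra))
    as Hreact.
  set (N := c zs ts ^ 4 - (a zs ts ^ 2 - b zs ts ^ 2) ^ 2) in *.
  match goal with |- ?lhs <= _ =>
    replace lhs with
      (c zs ts * dz (dz c) zs ts / phi zs ts ^ 2 - 2 * (N / (a zs ts ^ 2 * b zs ts ^ 2)))
      by (field; lra)
  end.
  assert (1 <= N / (a zs ts ^ 2 * b zs ts ^ 2)).
  { apply Rle_div_r; [apply Rmult_lt_0_compat; apply pow_lt |]; lra. }
  assert (c zs ts * dz (dz c) zs ts / phi zs ts ^ 2 <= 0).
  { assert (0 < / phi zs ts ^ 2) by (apply Rinv_0_lt_compat, pow_lt; lra).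
    assert (c zs ts * dz (dz c) zs ts <= 0) by nra.
    unfold Rdiv. nra. }
  lra.
Qed.

Lemma c_sq_decay :
  forall z t, 0 <= t -> Rbar_lt t T -> c z t ^ 2 + 4 * t <= chat c 0 ^ 2.
Proof.
  destruct chat_spec as [Hchat HK].
  apply (max_principle_derive T (fun z t => c z t ^ 2 + 4 * t)).
  - intros z t Ht HT. apply half_continuous_plus.
    + apply half_continuous_pow, c_regular; assumption.
    + apply half_continuous_mult; [apply half_continuous_const | apply half_continuous_time].
  - intros z t. now rewrite (regular_periodic _ _ c_regular).
  - intros z. pose proof (regular_pos _ _ c_regular z 0 (Rle_refl 0) T_pos).
    specialize (Hchat z). nra.
  - intros zs ts Hts HT _ Hmax.
    assert (Hcmax : forall z, c z ts <= c zs ts).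
    { intros z. pose proof (regular_pos _ _ c_regular z ts ltac:(lra) HT).
      pose proof (regular_pos _ _ c_regular zs ts ltac:(lra) HT).
      specialize (Hmax z). cbv beta in Hmax. nra. }
    pose proof (c_rate_at_max zs ts Hts HT Hcmax).
    exists (2 * (c zs ts * dt c zs ts) + 4). split; [| lra].
    auto_derive.
    + exists (dt c zs ts). exact (regular_dt _ _ c_regular zs ts Hts HT).
    + unfold dt. ring.
Qed.

Lemma c_sq_le_weight (z t : R) :
  0 <= t -> Rbar_lt t T -> 0 < c z t ^ 2 <= chat c 0 ^ 2 - 4 * t.
Proof.
  intros Ht HT. pose proof (c_sq_decay z t Ht HT).
  pose proof (regular_pos _ _ c_regular z t Ht HT). split; [apply pow_lt |]; lra.
Qed.

Lemma weighted_ratio_rate_at_max (zs ts : R) :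
  0 < ts -> Rbar_lt ts T -> (forall z, c z ts / a z ts <= c zs ts / a zs ts) ->
  exists d, is_derive (fun s => ((c zs s / a zs s) ^ 2 - 1) / (chat c 0 ^ 2 - 4 * s) ^ 2) ts d
    /\ d <= 0.
Proof.
  intros Hts HT Hratio_max. assert (Hts0 : 0 <= ts) by lra.
  pose proof (regular_pos _ _ a_regular zs ts Hts0 HT) as Ha.
  pose proof (regular_pos _ _ b_regular zs ts Hts0 HT) as Hb.
  pose proof (regular_pos _ _ c_regular zs ts Hts0 HT) as Hc.
  destruct (order_preserved zs ts Hts0 HT) as [Hac Hbc].
  destruct (c_sq_le_weight zs ts Hts0 HT) as [_ HcD].
  destruct (solution_flow zs ts Hts HT) as [Hdta [_ Hdtc]].
  rewrite flow_term_comm in Hdtc.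
  pose proof (ratio_rate_at_max T phi phi_regular c a b zs ts c_regular a_regular b_regular
    Hts0 HT Hdtc Hdta Hratio_max) as HX.
  set (X := dt c zs ts * a zs ts - c zs ts * dt a zs ts) in HX.
  set (D := chat c 0 ^ 2 - 4 * ts) in HcD.
  exists (2 * c zs ts * X / (a zs ts ^ 3 * D ^ 2) + 8 * (c zs ts ^ 2 / a zs ts ^ 2 - 1) / D ^ 3).
  split; [| apply (ratio_rate_nonpos _ (b zs ts)); lra].
  assert (HDpos : 0 < D) by nra. unfold D in HDpos.
  auto_derive.
  - repeat split.
    + exists (dt c zs ts). now apply (regular_dt _ _ c_regular).
    + exists (dt a zs ts). now apply (regular_dt _ _ a_regular).
    + lra.
    + apply Rgt_not_eq. nra.
  - unfold X, D, dt. field. split; lra.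
Qed.

Lemma weighted_ratio_bound (lambda : R) :
  (forall z, c z 0 / a z 0 <= lambda) ->
  forall z t, 0 <= t -> Rbar_lt t T ->
    ((c z t / a z t) ^ 2 - 1) / (chat c 0 ^ 2 - 4 * t) ^ 2 <= (lambda ^ 2 - 1) / chat c 0 ^ 4.
Proof.
  intros Hlambda. destruct chat_spec as [_ HK].
  apply (max_principle_derive T
    (fun z t => ((c z t / a z t) ^ 2 - 1) / (chat c 0 ^ 2 - 4 * t) ^ 2)).
  - intros z t Ht HT. pose proof (regular_pos _ _ a_regular z t Ht HT).
    destruct (c_sq_le_weight z t Ht HT).
    apply half_continuous_div; [| | apply pow_nonzero; lra].
    + apply half_continuous_minus; [| apply half_continuous_const].
      apply half_continuous_pow, half_continuous_div; [apply c_regular | apply a_regular | lra];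
        assumption.
    + apply half_continuous_pow, half_continuous_minus; [apply half_continuous_const |].
      apply half_continuous_mult; [apply half_continuous_const | apply half_continuous_time].
  - intros z t. now rewrite (regular_periodic _ _ a_regular), (regular_periodic _ _ c_regular).
  - intros z. pose proof (regular_pos _ _ a_regular z 0 (Rle_refl 0) T_pos).
    pose proof (regular_pos _ _ c_regular z 0 (Rle_refl 0) T_pos).
    replace ((chat c 0 ^ 2 - 4 * 0) ^ 2) with (chat c 0 ^ 4) by ring.
    apply Rmult_le_compat_r; [left; apply Rinv_0_lt_compat, pow_lt; lra |].
    assert (0 < c z 0 / a z 0) by (apply Rdiv_lt_0_compat; lra).
    specialize (Hlambda z). nra.
  - intros zs ts Hts HT _ Hmax. assert (Hts0 : 0 <= ts) by lra.
    apply weighted_ratio_rate_at_max; [exact Hts | exact HT |]. intros z.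
    pose proof (regular_pos _ _ a_regular z ts Hts0 HT).
    pose proof (regular_pos _ _ c_regular z ts Hts0 HT).
    pose proof (regular_pos _ _ a_regular zs ts Hts0 HT).
    pose proof (regular_pos _ _ c_regular zs ts Hts0 HT).
    destruct (c_sq_le_weight zs ts Hts0 HT).
    specialize (Hmax z). cbv beta in Hmax.
    apply Rmult_le_reg_r in Hmax; [| apply Rinv_0_lt_compat, pow_lt; lra].
    assert (0 < c z ts / a z ts) by (apply Rdiv_lt_0_compat; lra).
    assert (0 < c zs ts / a zs ts) by (apply Rdiv_lt_0_compat; lra).
    nra.
Qed.

Lemma ratio_sq_bounds (lambda : R) :
  (forall z, c z 0 / a z 0 <= lambda) ->
  forall z t, 0 <= t -> Rbar_lt t T ->
    1 <= c z t ^ 2 / a z t ^ 2 /\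
    c z t ^ 2 / a z t ^ 2 <= (lambda ^ 2 - 1) * (1 - 4 * t / chat c 0 ^ 2) ^ 2 + 1.
Proof.
  intros Hlambda z t Ht HT.
  pose proof (weighted_ratio_bound lambda Hlambda z t Ht HT) as Hq.
  destruct (c_sq_le_weight z t Ht HT) as [Hc2 Hcb].
  pose proof (regular_pos _ _ a_regular z t Ht HT) as Ha.
  pose proof (regular_pos _ _ c_regular z t Ht HT) as Hc.
  destruct (order_preserved z t Ht HT) as [Hac _].
  replace (c z t ^ 2 / a z t ^ 2) with ((c z t / a z t) ^ 2) by (field; lra).
  split.
  - assert (1 <= c z t / a z t) by (apply Rle_div_r; lra). nra.
  - assert (HK : 0 < chat c 0) by apply chat_spec.
    assert (HD : 0 < (chat c 0 ^ 2 - 4 * t) ^ 2) by (apply pow_lt; lra).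
    apply (Rle_div_l _ _ _ HD) in Hq.
    replace ((lambda ^ 2 - 1) * (1 - 4 * t / chat c 0 ^ 2) ^ 2)
      with ((lambda ^ 2 - 1) / chat c 0 ^ 4 * (chat c 0 ^ 2 - 4 * t) ^ 2) by (field; lra).
    lra.
Qed.

End InitialOrder.

End RicciFlow.

Theorem lemma4p5 (T : Rbar) (phi a b c : R -> R -> R) (lambda : R) :
  RF_maximal T phi a b c ->
  (forall z, 0 < a z 0 <= b z 0 /\ b z 0 <= c z 0) ->
  1 <= lambda ->
  (exists z, 1 <= c z 0 / a z 0) ->
  (forall z, c z 0 / a z 0 <= lambda) ->
  forall z t, 0 <= t -> Rbar_lt t T ->
    1 <= c z t ^ 2 / a z t ^ 2 /\
    c z t ^ 2 / a z t ^ 2 <=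
      exp (lambda ^ 2 - 1) * (lambda ^ 2 - 1) * (1 - 4 * t / chat c 0 ^ 2) ^ 2 + 1.
Proof.
  intros [Hsol _] Hinit Hlambda _ Hratio z t Ht HT.
  assert (Horder : forall x, a x 0 <= c x 0 /\ b x 0 <= c x 0).
  { intros x. destruct (Hinit x). lra. }
  destruct (ratio_sq_bounds T phi a b c Hsol Horder lambda Hratio z t Ht HT) as [Hlow Hup].
  split; [exact Hlow |].
  assert (Hexp : 1 <= exp (lambda ^ 2 - 1)).
  { pose proof (exp_ineq1_le (lambda ^ 2 - 1)). nra. }
  assert (Hgrowth : 0 <= (lambda ^ 2 - 1) * (1 - 4 * t / chat c 0 ^ 2) ^ 2).
  { apply Rmult_le_pos; [nra | apply pow2_ge_0]. }
  rewrite Rmult_assoc. nra.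
Qed.
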